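(* Let $n\ge1$ and let $c_0,\dots,c_{n-1}$ be mutually distinct complex numbers with $|c_j|=1$. Suppose there exist nonzero real numbers $x_0,\dots,x_{n-1}$ such that $$\sum_{j=0}^{n-1}c_j^kx_j=\delta_{k0},\qquad k=0,1,\dots,n-1 .$$ Then $x_j=1/n$ for all $j$, and, after a suitable reordering of $c_1,\dots,c_{n-1}$, $c_j=c_0e^{2\pi ij/n}$ for $j=0,1,\dots,n-1$.
   Context: $\delta_{k0}$ denotes the Kronecker delta. *)

From mathcomp Require Import all_boot all_algebra.
From mathcomp Require Import reals trigo.
From mathcomp Require Export complex.
Import GRing.Theory Num.Theory.
Local Open Scope ring_scope.
Local Open Scope complex_scope.

Definition expi {R : realType} (t : R) : R[i] := cos t +i* sin t.

(* With [|c_j| = 1] and [x] real, conjugating the moment conditions gives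
   [sum_j conj(c_j)^a x_j c_j^b = delta_ab] for [a, b < n], i.e. [A U = 1] for
   the Vandermonde matrix [U = (c_j^k)] and [A = (conj(c_j)^a x_j)].  Hence
   also [U A = 1], i.e. [sum_k (c_j conj(c_l))^k x_l = delta_jl].  On the
   diagonal this reads [n x_j = 1]; off the diagonal it makes [c_j conj(c_l)]
   a root of the geometric sum, hence an [n]-th root of unity.  So the [n]
   distinct numbers [c_j / c_0] are exactly the [n]-th roots of unity, i.e.
   the powers of [e^(2 pi i/n)]. *)
From mathcomp Require Import all_boot all_algebra all_fingroup.
From mathcomp Require Import reals trigo complex.
From mathcomp Require Import order lra.
Import Order.TTheory GRing.Theory Num.Theory.
Local Open Scope ring_scope.
Local Open Scope complex_scope.

Section Expi.
Variable R : realType.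

Lemma expiD (a b : R) : expi (a + b) = expi a * expi b.
Proof.
by rewrite /expi cosD sinD; apply/eqP; rewrite eq_complex /= !eqxx addrC eqxx.
Qed.

Lemma expi0 : expi (0 : R) = 1.
Proof. by rewrite /expi cos0 sin0. Qed.

Lemma expiMn (a : R) k : expi (a *+ k) = expi a ^+ k.
Proof.
elim: k => [|k IHk]; first by rewrite mulr0n expi0.
by rewrite mulrSr expiD IHk exprSr.
Qed.

Lemma expi_2pi : expi (2 * pi : R) = 1.
Proof. by rewrite /expi mulr_natl cos2pi sin2pi. Qed.

Lemma expi_neq1 (t : R) : 0 < t < pi *+ 2 -> expi t != 1.
Proof.
move=> /andP[t_gt0 t_lt2pi]; apply/negP => /eqP [] cos1 sin0.
case: (ltgtP t pi) => t_pi.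
- by move: (@sin_gt0_pi R t); rewrite t_gt0 t_pi sin0 ltxx => /(_ isT).
- have h : 0 < t - pi < pi by rewrite subr_gt0 t_pi ltrBlDr -mulr2n.
  move: (@sin_gt0_pi R _ h); have := sinDpi (t - pi); rewrite subrK sin0.
  by move=> /eqP; rewrite eq_sym oppr_eq0 => /eqP ->; rewrite ltxx.
- by move: cos1; rewrite t_pi cospi; lra.
Qed.

Lemma expi_frac_2pi n (j : nat) :
  expi (2 * pi * j%:R / n%:R) = expi (2 * pi / n%:R) ^+ j :> R[i].
Proof. by rewrite -expiMn mulrAC mulr_natr. Qed.

Lemma prim_root_expi {n} : (0 < n)%N ->
  n.-primitive_root (expi (2 * pi / n%:R) : R[i]).
Proof.
move=> n_gt0; rewrite /primitive_root_of_unity n_gt0; apply/forallP => i /=.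
rewrite unity_rootE -expi_frac_2pi.
have n_pos : (0 : R) < n%:R by rewrite ltr0n.
case: (eqVneq i.+1 n) => [-> | i1_neq_n].
  by rewrite mulfK ?(gt_eqF n_pos) // expi_2pi !eqxx.
rewrite eqbF_neg; apply: expi_neq1; have pi_gt0 := @pi_gt0 R.
have i1_lt_n : (i.+1 < n)%N by rewrite ltn_neqAle i1_neq_n ltn_ord.
have i1_pos : (0 : R) < i.+1%:R by rewrite ltr0n.
have i1_lt : (i.+1%:R : R) < n%:R by rewrite ltr_nat.
apply/andP; split; first by rewrite divr_gt0 // !mulr_gt0.
by rewrite ltr_pdivrMr // -[pi *+ 2]mulr_natl ltr_pM2l // mulr_gt0.
Qed.

End Expi.

Lemma mulrn_eq1_div (F : fieldType) n (y : F) : y *+ n = 1 -> y = 1 / n%:R.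
Proof. by move=> yn1; rewrite div1r; apply/esym/mulr1_eq; rewrite mulr_natl. Qed.

Lemma geometric_sum_eq0_root (R : pzRingType) (z : R) n :
  \sum_(k < n) z ^+ k = 0 -> z ^+ n = 1.
Proof. by move=> sum0; apply/eqP; rewrite -subr_eq0 subrX1 sum0 mulr0. Qed.

(* A left inverse of a square matrix is a right inverse, in coordinates. *)
Lemma biorthogonal_sym {R : comPzRingType} {n} {f g : 'I_n -> 'I_n -> R} :
  (forall a b, \sum_j f a j * g j b = (a == b)%:R) ->
  forall j l, \sum_a g j a * f a l = (j == l)%:R.
Proof.
move=> fg j l.
have FG : (\matrix_(a, j) f a j) *m (\matrix_(j, b) g j b) = 1%:M.
  by apply/matrixP => a b; rewrite !mxE -fg; apply: eq_bigr => k _; rewrite !mxE.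
have /matrixP/(_ j l) := mulmx1C FG; rewrite !mxE => <-.
by apply: eq_bigr => a _; rewrite !mxE.
Qed.

Lemma perm_prim_root_powers {F : fieldType} {n} {w : F} {g : 'I_n -> F} :
  n.-primitive_root w -> injective g -> (forall j, g j ^+ n = 1) ->
  exists s : {perm 'I_n}, forall j, g (s j) = w ^+ j.
Proof.
move=> prim_w g_inj g_root.
pose t l := sval (prim_rootP prim_w (g_root l)).
have gt l : g l = w ^+ t l := svalP (prim_rootP prim_w (g_root l)).
have t_inj : injective t by move=> l l' tl; apply: g_inj; rewrite !gt tl.
exists (perm t_inj)^-1%g => j.
by rewrite gt -[in RHS](permKV (perm t_inj) j) permE.
Qed.

Section UnitaryMoments.
Context {R : rcfType} {n : nat} {c : 'I_n -> R[i]} {x : 'I_n -> R}.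
Hypothesis norm_c : forall j, `|c j| = 1.
Hypothesis moments : forall k : nat, (k < n)%N ->
  \sum_(j < n) c j ^+ k * (x j)%:C = (k == 0%N)%:R.

Lemma mulc_conj j : c j * (c j)^* = 1.
Proof. by rewrite -[LHS]sqr_sqrtc -normcE norm_c expr1n. Qed.

Lemma conj_c_neq0 j : (c j)^* != 0.
Proof. by rewrite conjc_eq0 -normr_eq0 norm_c oner_eq0. Qed.

Lemma conjc_mulc j : (c j)^* * c j = 1.
Proof. by rewrite mulrC mulc_conj. Qed.

Lemma conjcX_mul_cXD j a b : (c j)^* ^+ a * c j ^+ (a + b) = c j ^+ b.
Proof. by rewrite exprD mulrA -exprMn conjc_mulc expr1n mul1r. Qed.

Lemma conjcXD_mul_cX j a b : (c j)^* ^+ (a + b) * c j ^+ a = (c j)^* ^+ b.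
Proof. by rewrite exprD mulrAC -exprMn conjc_mulc expr1n mul1r. Qed.

Lemma conj_moments k : (k < n)%N ->
  \sum_j (c j)^* ^+ k * (x j)%:C = (k == 0%N)%:R.
Proof.
move=> k_lt; rewrite -[RHS]conjc_nat -moments // rmorph_sum.
by apply: eq_bigr => j _; rewrite rmorphM rmorphXn /= oppr0.
Qed.

Lemma moments_gram a b : (a < n)%N -> (b < n)%N ->
  \sum_j (c j)^* ^+ a * (x j)%:C * c j ^+ b = (a == b)%:R.
Proof.
case: (leqP a b) => [le_ab | /ltnW le_ba] a_lt b_lt.
- have [d def_b] : exists d, b = (a + d)%N by exists (b - a)%N; rewrite subnKC.
  rewrite def_b; have -> : (a == a + d)%N = (d == 0%N).
    by rewrite -{1}(addn0 a) eqn_add2l eq_sym.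
  under eq_bigr do rewrite mulrAC conjcX_mul_cXD.
  by rewrite moments // (leq_ltn_trans (leq_addl a d)) -?def_b.
- have [d def_a] : exists d, a = (b + d)%N by exists (a - b)%N; rewrite subnKC.
  rewrite def_a; have -> : (b + d == b)%N = (d == 0%N).
    by rewrite -{2}(addn0 b) eqn_add2l.
  under eq_bigr do rewrite mulrAC conjcXD_mul_cX.
  by rewrite conj_moments // (leq_ltn_trans (leq_addl b d)) -?def_a.
Qed.

Lemma moments_dual j l :
  \sum_(k < n) (c j * (c l)^*) ^+ k * (x l)%:C = (j == l)%:R.
Proof.
pose f (a j : 'I_n) := (c j)^* ^+ a * (x j)%:C; pose g (j b : 'I_n) := c j ^+ b.
have fg a b : \sum_j f a j * g j b = (a == b)%:R by apply: moments_gram.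
by rewrite -(biorthogonal_sym fg); apply: eq_bigr => k _; rewrite exprMn mulrA.
Qed.

Lemma weights_eq j : x j = 1 / n%:R.
Proof.
apply: mulrn_eq1_div; apply: complexI; rewrite rmorphMn rmorph1.
have := moments_dual j j; rewrite eqxx mulc_conj.
by under eq_bigr do rewrite expr1n mul1r; rewrite sumr_const card_ord.
Qed.

Lemma weights_neq0 j : x j != 0.
Proof.
by rewrite weights_eq div1r invr_eq0 pnatr_eq0 -lt0n (leq_ltn_trans _ (ltn_ord j)).
Qed.

Lemma ratio_root_of_unity j l : (c j * (c l)^*) ^+ n = 1.
Proof.
have [-> | neq_jl] := eqVneq j l; first by rewrite mulc_conj expr1n.
have xl_neq0 : (x l)%:C != 0 by rewrite eq_complex negb_and weights_neq0.
apply: geometric_sum_eq0_root; apply: (mulIf xl_neq0).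
by rewrite mulr_suml moments_dual (negbTE neq_jl) mul0r.
Qed.

End UnitaryMoments.

Theorem lemma2 (R : realType) (n : nat) (hn : (0 < n)%N)
  (c : 'I_n -> R[i]) (x : 'I_n -> R) :
  injective c ->
  (forall j, `|c j| = 1) ->
  (forall j, x j != 0) ->
  (forall k : nat, (k < n)%N ->
     \sum_(j < n) (c j) ^+ k * (x j)%:C = (k == 0%N)%:R) ->
  (forall j, x j = 1 / n%:R) /\
  exists s : {perm 'I_n},
    s (Ordinal hn) = Ordinal hn /\
    forall j : 'I_n,
      c (s j) = c (Ordinal hn) * expi (2 * pi * (val j)%:R / n%:R).
Proof.
move=> c_inj norm_c _ moments; split; first exact: weights_eq norm_c moments.
set j0 := Ordinal hn; pose g j := c j * (c j0)^*.
have g_inj : injective g by move=> j j' /(mulIf (conj_c_neq0 norm_c j0)) /c_inj.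
have [s gs] := perm_prim_root_powers (prim_root_expi R hn) g_inj
  (fun j => ratio_root_of_unity norm_c moments j j0).
have s0 : s j0 = j0 by apply: g_inj; rewrite gs expr0 /g (mulc_conj norm_c).
exists s; split => // j.
by rewrite expi_frac_2pi -gs /g mulrCA (mulc_conj norm_c) mulr1.
Qed.
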